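(* Let $\mathbf{F}$ and $\mathbf{E}$ be normed spaces of functions over a set $X$, with $\mathbf{F}$ being $1$-independent. Then: (i) if $\mathbf{E}$ is regular, then so is $Mult(\mathbf{F},\mathbf{E})$; (ii) $Mult(\mathbf{F},\mathbf{E})\subset Mult(\widehat{\mathbf{F}},\widehat{\mathbf{E}})$ and $\|\omega\|_{Mult(\widehat{\mathbf{F}},\widehat{\mathbf{E}})}\le\|\omega\|_{Mult(\mathbf{F},\mathbf{E})}$ for all $\omega\in Mult(\mathbf{F},\mathbf{E})$.
   Context: $\mathcal{F}(X)$ is the space of all functions $X\to\mathbb{C}$ with the topology of pointwise convergence. A normed space of functions (NSF) over $X$ is a linear subspace of $\mathcal{F}(X)$ with a norm for which every point evaluation is bounded; it is $1$-independent if for each $x$ some $f\in\mathbf{F}$ has $f(x)\ne0$, and regular if its closed unit ball is closed in $\mathcal{F}(X)$. For an NSF $\mathbf{F}$, let $C_{\mathbf{F}}$ be the closure in $\mathcal{F}(X)$ of the unit ball of $\mathbf{F}$; $\widehat{\mathbf{F}}=\{\alpha f:\alpha>0,\ f\in C_{\mathbf{F}}\}$ is the NSF over $X$ whose closed unit ball is $C_{\mathbf{F}}$ (norm = Minkowski functional of $C_{\mathbf{F}}$). $Mult(\mathbf{F},\mathbf{E})$ is the set of $\omega:X\to\mathbb{C}$ with $\omega f\in\mathbf{E}$ for all $f\in\mathbf{F}$ and $M_\omega:f\mapsto\omega f$ bounded $\mathbf{F}\to\mathbf{E}$, normed by $\|M_\omega\|$ (a normed space of functions over $X$ when $\mathbf{F}$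 is $1$-independent). *)

From HB Require Import structures.
From mathcomp Require Import all_boot all_order all_algebra.
From mathcomp Require Import complex.
From mathcomp Require Import classical_sets boolp reals.
From Stdlib Require List.

Set Implicit Arguments. Unset Strict Implicit. Unset Printing Implicit Defensive.
Import Order.TTheory GRing.Theory Num.Theory.
Local Open Scope ring_scope.
Local Open Scope classical_set_scope.

Section NSF.
Context {R : realType} {X : Type}.

Local Notation fn := (X -> R[i]).

Definition cabs (z : R[i]) : R := Normc.normc z.

Definition fzero : fn := fun _ => 0.
Definition fadd (f g : fn) : fn := fun x => f x + g x.
Definition fscale (a : R[i]) (f : fn) : fn := fun x => a * f x.
Definition fmul (w f : fn) : fn := fun x => w x * f x.

(* A normed space of functions: a linear subspace S of F(X) with a norm n
   (only its values on S matter) such that each point evaluation is bounded. *)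
Definition is_NSF (S : set fn) (n : fn -> R) : Prop :=
  [/\ S fzero,
      (forall f g, S f -> S g -> S (fadd f g)) &
      (forall a f, S f -> S (fscale a f))] /\
  [/\ (forall f, S f -> 0 <= n f),
      (forall f, S f -> n f = 0 -> f = fzero),
      (forall a f, S f -> n (fscale a f) = cabs a * n f) &
      (forall f g, S f -> S g -> n (fadd f g) <= n f + n g)] /\
  (forall x : X, exists c : R, forall f, S f -> cabs (f x) <= c * n f).

Definition one_independent (S : set fn) : Prop :=
  forall x : X, exists f, S f /\ f x <> 0.

(* closure in F(X) for the topology of pointwise convergence (product
   topology): f is adherent to A iff every basic neighbourhood of f, given by
   finitely many points and a radius e > 0, meets A. *)
Definition ptws_closure (A : set fn) : set fn :=
  fun f => forall (xs : seq X) (e : R), 0 < e ->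
    exists g, A g /\ forall x, List.In x xs -> cabs (g x - f x) < e.

Definition ptws_closed (A : set fn) : Prop := ptws_closure A `<=` A.

Definition unit_ball (S : set fn) (n : fn -> R) : set fn :=
  [set f | S f /\ n f <= 1].

Definition regular (S : set fn) (n : fn -> R) : Prop :=
  ptws_closed (unit_ball S n).

Definition CF (S : set fn) (n : fn -> R) : set fn :=
  ptws_closure (unit_ball S n).

Definition hat_set (S : set fn) (n : fn -> R) : set fn :=
  [set h | exists (a : R) g, 0 < a /\ CF S n g /\ h = fscale (Complex a 0) g].

Definition hat_norm (S : set fn) (n : fn -> R) (h : fn) : R :=
  inf [set a : R | 0 < a /\ exists g, CF S n g /\ h = fscale (Complex a 0) g].

Definition mult_set (S : set fn) (n : fn -> R) (T : set fn) (m : fn -> R)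
  : set fn :=
  [set w | (forall f, S f -> T (fmul w f)) /\
           exists c : R, forall f, S f -> m (fmul w f) <= c * n f].

Definition mult_norm (S : set fn) (n : fn -> R) (T : set fn) (m : fn -> R)
  (w : fn) : R :=
  sup [set r : R | exists f, S f /\ n f <= 1 /\ r = m (fmul w f)].

End NSF.

From HB Require Import structures.
From mathcomp Require Import all_boot all_order all_algebra.
From mathcomp Require Import complex.
From mathcomp Require Import classical_sets boolp reals.
From Stdlib Require List.
Import Order.TTheory GRing.Theory Num.Theory.
Local Open Scope ring_scope.
Local Open Scope classical_set_scope.
Set Implicit Arguments. Unset Strict Implicit. Unset Printing Implicit Defensive.

(* Multiplication by a fixed function k is continuous for pointwise
   convergence, so if it maps A into B it maps the pointwise closure of A into
   that of B.  For (i): if w lies in the closure of the unit ball of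
   Mult(F, E) and u is in the unit ball of F, then w u is a pointwise limit of
   products v u lying in the unit ball of E, which is closed; homogeneity of
   the norms then makes w a multiplier of norm at most 1.  For (ii): if
   c > ||w||, then w / c maps the unit ball of F into that of E, hence C_F into
   C_E; so w sends a g (a > 0, g in C_F) to (a c) (w g / c) with w g / c in
   C_E, which bounds the multiplier norm of w between the hat spaces by c. *)

Section Multipliers.
Context {R : realType} {X : Type}.
Local Notation fn := (X -> R[i]).
Implicit Types (A B S T : set fn) (n m : fn -> R) (f g h k u v w : fn).

Lemma cabs_ge0 (z : R[i]) : 0 <= cabs z.
Proof. by case: z => a b; rewrite /cabs /= sqrtr_ge0. Qed.

Lemma cabsM (a b : R[i]) : cabs (a * b) = cabs a * cabs b.
Proof. exact: Normc.normcM. Qed.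

Lemma cabs_real (a : R) : cabs (Complex a 0) = `|a|.
Proof. by rewrite /cabs /= expr0n /= addr0 sqrtr_sqr. Qed.

Lemma real_complexM (a b : R) :
  Complex a 0 * Complex b 0 = Complex (a * b) 0 :> R[i].
Proof. exact: esym (rmorphM (real_complex R) a b). Qed.

Lemma fmulC w f : fmul w f = fmul f w.
Proof. by apply/funext => x; rewrite /fmul mulrC. Qed.

Lemma fmul0 w : fmul w fzero = fzero.
Proof. by apply/funext => x; rewrite /fmul /fzero mulr0. Qed.

Lemma fmulZ w a f : fmul w (fscale a f) = fscale a (fmul w f).
Proof. by apply/funext => x; rewrite /fmul /fscale mulrCA. Qed.

Lemma fscaleA a b f : fscale a (fscale b f) = fscale (a * b) f.
Proof. by apply/funext => x; rewrite /fscale mulrA. Qed.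

Lemma fscale1 f : fscale 1 f = f.
Proof. by apply/funext => x; rewrite /fscale mul1r. Qed.

Lemma fscale0 a : fscale a fzero = fzero :> fn.
Proof. by apply/funext => x; rewrite /fscale /fzero mulr0. Qed.

Lemma sub_ptws_closure A : A `<=` ptws_closure A.
Proof.
move=> f Af xs e e0; exists f; split => // x _.
by rewrite subrr /cabs /= expr0n /= addr0 sqrtr0.
Qed.

Lemma cabs_bounded_on_seq k (xs : seq X) :
  exists2 K : R, 0 < K & forall x, List.In x xs -> cabs (k x) <= K.
Proof.
elim: xs => [|y xs [K K0 kK]]; first by exists 1.
have ky0 := cabs_ge0 (k y).
exists (K + cabs (k y)) => [|x /= [<-|xxs]]; first exact: ltr_wpDr.
- exact: ler_wpDl (ltW K0) _.
- exact: ler_wpDr ky0 (kK x xxs).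
Qed.

Lemma fmul_ptws_closure k A B : (forall f, A f -> B (fmul k f)) ->
  forall g, ptws_closure A g -> ptws_closure B (fmul k g).
Proof.
move=> AB g gA xs e e0; have [K K0 kK] := cabs_bounded_on_seq k xs.
have [f [Af fg]] := gA xs (e / K) (divr_gt0 e0 K0).
exists (fmul k f); split; first exact: AB.
move=> x xxs; rewrite /fmul -mulrBr cabsM.
apply: le_lt_trans (ler_wpM2r (cabs_ge0 _) (kK x xxs)) _.
by rewrite mulrC -ltr_pdivlMr //; apply: fg.
Qed.

Section NormedSpaceOfFunctions.
Variables (S : set fn) (n : fn -> R).
Hypothesis nsfS : is_NSF S n.

Lemma nsf_scale a f : S f -> S (fscale a f).
Proof. by case: nsfS => -[_ _ SZ] _; apply: SZ. Qed.

Lemma nsf_normZ a f : S f -> n (fscale a f) = cabs a * n f.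
Proof. by case: nsfS => _ [[_ _ nZ _] _]; apply: nZ. Qed.

Lemma nsf_norm_ge0 f : S f -> 0 <= n f.
Proof. by case: nsfS => _ [[n0 _ _ _] _]; apply: n0. Qed.

Lemma nsf_norm_eq0 f : S f -> n f = 0 -> f = fzero.
Proof. by case: nsfS => _ [[_ n00 _ _] _]; apply: n00. Qed.

Lemma nsf_norm0 : n fzero = 0.
Proof.
have S0 : S fzero by case: nsfS => -[].
by rewrite -(fscale0 0) nsf_normZ // /cabs /= expr0n /= addr0 sqrtr0 mul0r.
Qed.

Lemma nsf_unit_ball0 : unit_ball S n fzero.
Proof. by split; [case: nsfS => -[] | rewrite nsf_norm0 ler01]. Qed.

Lemma nsf_normalize f : S f -> 0 < n f ->
  exists2 u, unit_ball S n u & f = fscale (Complex (n f) 0) u.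
Proof.
move=> Sf nf0; exists (fscale (Complex (n f)^-1 0) f).
  split; first exact: nsf_scale.
  by rewrite nsf_normZ // cabs_real gtr0_norm ?invr_gt0 // mulVf ?gt_eqF.
by rewrite fscaleA real_complexM mulfV ?gt_eqF // fscale1.
Qed.

End NormedSpaceOfFunctions.

Lemma fmul_bound_of_unit_ball S n T m w c : is_NSF S n -> is_NSF T m ->
  (forall u, unit_ball S n u -> T (fmul w u) /\ m (fmul w u) <= c) ->
  forall f, S f -> T (fmul w f) /\ m (fmul w f) <= c * n f.
Proof.
move=> nsfS nsfT wS f Sf.
have [nf0|nf_neq0] := eqVneq (n f) 0.
  rewrite nf0 mulr0 (nsf_norm_eq0 nsfS Sf nf0) fmul0 (nsf_norm0 nsfT).
  by split; [case: nsfT => -[] | ].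
have nf_gt0 : 0 < n f by rewrite lt_def nf_neq0 (nsf_norm_ge0 nsfS Sf).
have [u uS fu] := nsf_normalize nsfS Sf nf_gt0.
have [Twu mwu] := wS u uS.
have -> : fmul w f = fscale (Complex (n f) 0) (fmul w u) by rewrite {1}fu fmulZ.
rewrite (nsf_normZ nsfT) // cabs_real gtr0_norm // mulrC.
by split; [exact: (nsf_scale nsfT) | apply: ler_wpM2r mwu; exact: ltW].
Qed.

Lemma mult_norm_le S n T m w c : unit_ball S n fzero ->
  (forall f, unit_ball S n f -> m (fmul w f) <= c) -> mult_norm S n T m w <= c.
Proof.
move=> [S0 n01] wS; apply: ge_sup; first by exists (m (fmul w fzero)), fzero.
by move=> _ [f [Sf [nf1 ->]]]; apply: wS.
Qed.

Lemma hat_norm_le S n a g : 0 < a -> CF S n g ->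
  hat_norm S n (fscale (Complex a 0) g) <= a.
Proof.
move=> a0 gC; apply: ge_inf; last by split => //; exists g.
by exists 0 => b [b0 _]; apply: ltW.
Qed.

Lemma hat_norm_ge S n h x : hat_set S n h ->
  (forall a g, 0 < a -> CF S n g -> h = fscale (Complex a 0) g -> x <= a) ->
  x <= hat_norm S n h.
Proof.
move=> [a [g [a0 [gC hag]]]] hS.
apply: lb_le_inf; first by exists a; split => //; exists g.
by move=> b [b0 [g' [g'C hbg']]]; apply: hS g'C hbg'.
Qed.

Lemma unit_ball_hat0 S n : unit_ball S n fzero ->
  unit_ball (hat_set S n) (hat_norm S n) fzero.
Proof.
move=> S0; have zeroC : CF S n fzero := sub_ptws_closure S0.
rewrite -[fzero](fscale1 fzero); split; first by exists 1, fzero.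
exact: hat_norm_le ltr01 zeroC.
Qed.

Section MultiplierSpace.
Variables (F : set fn) (nF : fn -> R) (E : set fn) (nE : fn -> R).
Hypotheses (nsfF : is_NSF F nF) (nsfE : is_NSF E nE).
Local Notation Mult := (mult_set F nF E nE).
Local Notation normM := (mult_norm F nF E nE).

Lemma mult_set_of_unit_ball_bound w c :
  (forall u, unit_ball F nF u -> E (fmul w u) /\ nE (fmul w u) <= c) -> Mult w.
Proof.
move=> wF; have wFE := fmul_bound_of_unit_ball nsfF nsfE wF.
by split; [move=> f /wFE [] | exists c => f /wFE []].
Qed.

Lemma mult_norm_ub w f : Mult w -> unit_ball F nF f -> nE (fmul w f) <= normM w.
Proof.
move=> [_ [c wc]] fF; apply: sup_upper_bound; last by exists f; case: fF.
split; first by exists (nE (fmul w f)), f; case: fF.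
exists `|c| => _ [g [Fg [ng1 ->]]]; apply: le_trans (wc g Fg) _.
apply: le_trans (ler_wpM2r (nsf_norm_ge0 nsfF Fg) (ler_norm c)) _.
exact: ler_piMr.
Qed.

Lemma mult_norm_ge0 w : Mult w -> 0 <= normM w.
Proof.
move=> Mw; have := mult_norm_ub Mw (nsf_unit_ball0 nsfF).
by rewrite fmul0 (nsf_norm0 nsfE).
Qed.

Lemma regular_mult_set : regular E nE -> regular Mult normM.
Proof.
move=> regE w wC.
have wF u : unit_ball F nF u -> E (fmul w u) /\ nE (fmul w u) <= 1.
  move=> uF; apply: regE; rewrite fmulC.
  apply: fmul_ptws_closure wC => v [Mv nv1]; rewrite fmulC.
  split; first exact: (proj1 Mv) _ (proj1 uF).
  exact: le_trans (mult_norm_ub Mv uF) nv1.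
split; first exact: mult_set_of_unit_ball_bound wF.
by apply: mult_norm_le (nsf_unit_ball0 nsfF) _ => f /wF [].
Qed.

Lemma hat_mult_bound w c : 0 < c ->
  (forall u, unit_ball F nF u -> E (fmul w u) /\ nE (fmul w u) <= c) ->
  forall h, hat_set F nF h ->
    hat_set E nE (fmul w h) /\ hat_norm E nE (fmul w h) <= c * hat_norm F nF h.
Proof.
move=> c0 wF; pose k : fn := fun x => Complex c^-1 0 * w x.
have fmul_k f : fmul k f = fscale (Complex c^-1 0) (fmul w f).
  by apply/funext => x; rewrite /fmul /fscale mulrA.
have kC g : CF F nF g -> CF E nE (fmul k g).
  rewrite /CF.
  apply: fmul_ptws_closure => u /wF [Ewu nwu]; rewrite fmul_k.
  split; first exact: (nsf_scale nsfE).
  rewrite (nsf_normZ nsfE) // cabs_real gtr0_norm ?invr_gt0 //.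
  by rewrite ler_pdivrMl // mulr1.
have w_scale a g :
    fmul w (fscale (Complex a 0) g) = fscale (Complex (a * c) 0) (fmul k g).
  by rewrite fmul_k fscaleA real_complexM mulfK ?gt_eqF // fmulZ.
move=> _ [a [g [a0 [gC ->]]]]; split.
  exists (a * c), (fmul k g).
  by rewrite w_scale; split; [exact: mulr_gt0 | split; [exact: kC |]].
rewrite -ler_pdivrMl //; apply: hat_norm_ge; first by exists a, g.
move=> b g' b0 g'C ->; rewrite ler_pdivrMl // mulrC w_scale.
exact: hat_norm_le (mulr_gt0 b0 c0) (kC _ g'C).
Qed.

Lemma mult_set_hat w : Mult w ->
  mult_set (hat_set F nF) (hat_norm F nF) (hat_set E nE) (hat_norm E nE) w /\
  mult_norm (hat_set F nF) (hat_norm F nF) (hat_set E nE) (hat_norm E nE) w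
    <= normM w.
Proof.
move=> Mw; have M0 := mult_norm_ge0 Mw.
have hat_bound e : 0 < e -> forall h, hat_set F nF h ->
    hat_set E nE (fmul w h) /\
    hat_norm E nE (fmul w h) <= (normM w + e) * hat_norm F nF h.
  move=> e0; apply: hat_mult_bound; first exact: ltr_wpDl.
  move=> u uF; split; first exact: (proj1 Mw) _ (proj1 uF).
  by apply: le_trans (mult_norm_ub Mw uF) _; rewrite lerDl ltW.
split.
  split; first by move=> h /(hat_bound _ ltr01) [].
  by exists (normM w + 1) => h /(hat_bound _ ltr01) [].
apply/ler_addgt0Pr => e e0.
apply: mult_norm_le (unit_ball_hat0 (nsf_unit_ball0 nsfF)) _ => h [hF nh1].
have [_ whE] := hat_bound e e0 h hF.
exact: le_trans whE (ler_piMr (addr_ge0 M0 (ltW e0)) nh1).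
Qed.

End MultiplierSpace.
End Multipliers.

Theorem proposition5p5 (R : realType) (X : Type)
  (F : set (X -> R[i])) (nF : (X -> R[i]) -> R)
  (E : set (X -> R[i])) (nE : (X -> R[i]) -> R) :
  is_NSF F nF -> is_NSF E nE -> one_independent F ->
  (regular E nE -> regular (mult_set F nF E nE) (mult_norm F nF E nE)) /\
  (forall w, mult_set F nF E nE w ->
     mult_set (hat_set F nF) (hat_norm F nF) (hat_set E nE) (hat_norm E nE) w /\
     mult_norm (hat_set F nF) (hat_norm F nF) (hat_set E nE) (hat_norm E nE) w
       <= mult_norm F nF E nE w).
Proof.
(* 1-independence only serves to make Mult(F, E) an NSF, which is not claimed. *)
move=> nsfF nsfE _; split; first exact: regular_mult_set.
by move=> w; apply: mult_set_hat.
Qed.
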